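(* Consider a classical Hamiltonian system on phase space with Liouville measure $\mu$ and Hamiltonian flow $\Gamma\mapsto \Gamma(t)$, whose microscopic dynamics is time-reversal covariant with respect to an involution $\Theta$ ($\Theta^2=1$) that leaves $\mu$ invariant. Let $W(\Gamma)=e^{\Psi(\Gamma)}>0$ be a weight function, let $\langle X\rangle_W=\int X\,W\,d\mu/\int W\,d\mu$ denote weighted expectation, and let $\chi(\Gamma)=W(\Theta\Gamma)/W(\Gamma)$. Let $A_1,\dots,A_n$ be observables with $A_i(\Theta\Gamma)=\varepsilon_i A_i(\Gamma)$, $\varepsilon_i\in\{\pm1\}$, with fluxes $J_i=\dot A_i$ (so that $J_i(\Theta\Gamma)=-\varepsilon_i J_i(\Gamma)$), and define $L_{ij}^{(W)}=\int_0^\infty \langle J_i(0)J_j(t)\rangle_W\,dt$. Then $$L_{ij}^{(W)}-\varepsilon_i\varepsilon_j L_{ji}^{(W)}=\int_0^\infty \big\langle (1-\chi(\Gamma))\,J_i(0)\,J_j(t)\big\rangle_W\,dt .$$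
   Context: Phase-space points are $\Gamma=(q_1,\dots,q_N,p_1,\dots,p_N)$; the dynamics is generated by a Hamiltonian $H(\Gamma;\lambda)$ and $J_i(t)$ denotes $J_i$ evaluated at the time-$t$ evolved point $\Gamma(t)$ starting from $\Gamma$, so $J_i(0)=J_i(\Gamma)$; $J_i=i\mathcal{L}A_i$ with $\mathcal{L}$ the Liouville operator. Time-reversal covariance of the dynamics means that evolving $\Theta\Gamma$ forward by time $t$ equals $\Theta$ applied to $\Gamma$ evolved by time $-t$; in particular $J_j(t,\Theta\Gamma)=-\varepsilon_j J_j(-t,\Gamma)$. In the weighted expectation inside the integral, $\chi$ is evaluated at the initial phase-space point $\Gamma$.
   Formalization: The weight is invariant under the Hamiltonian flow, Ψ(Γ(t)) = Ψ(Γ) for all t and Γ, and the integrals defining the weighted expectations and $L_{ij}^{(W)}$ exist. Apart from conventions, each condition added here is assumed in the paper as well or is needed for the statement above to hold. *)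

From HB Require Import structures.
From mathcomp Require Import all_boot all_order all_algebra.
From mathcomp Require Import all_classical all_reals all_analysis.

Set Implicit Arguments.
Unset Strict Implicit.
Unset Printing Implicit Defensive.

Import Order.TTheory GRing.Theory Num.Theory.
Import numFieldNormedType.Exports.

Local Open Scope classical_set_scope.
Local Open Scope ring_scope.

Section Defs.
Context {R : realType} {d : measure_display} {T : measurableType d}.

Definition flux (phi : R -> T -> T) (A : T -> R) (x : T) : R :=
  derive1 (fun t : R => A (phi t x)) 0.

Definition wexp (mu : {measure set T -> \bar R}) (W : T -> R) (X : T -> R) : R :=
  (\int[mu]_x (X x * W x)) / (\int[mu]_x W x).

Definition chi (Theta : T -> T) (W : T -> R) (x : T) : R := W (Theta x) / W x.

Definition Lcoef (mu : {measure set T -> \bar R}) (phi : R -> T -> T)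
    (W : T -> R) (Ji Jj : T -> R) : R :=
  \int[lebesgue_measure]_(t in `[0%R, +oo[%classic)
     wexp mu W (fun x => Ji x * Jj (phi t x)).

End Defs.

From HB Require Import structures.
From mathcomp Require Import all_boot all_order all_algebra.
From mathcomp Require Import all_classical all_reals all_analysis.
From mathcomp Require Import measurable_realfun ring.
Import Order.TTheory GRing.Theory Num.Theory.
Import numFieldNormedType.Exports.
Local Open Scope classical_set_scope.
Local Open Scope ring_scope.

(* Substituting x := Theta y, which preserves mu, and using J_k o Theta = - eps_k J_k
   together with time-reversal covariance turns the correlation with the reversed
   weight, int J_i J_j(t) (W o Theta) dmu, into eps_i eps_j int J_i J_j(-t) W dmu;
   shifting along the flow (mu-invariance, stationarity of W) makes it
   eps_i eps_j int J_j J_i(t) W dmu.  Since (1 - chi) W = W - W o Theta, integrating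
   this identity over t >= 0 gives the claim. *)

Section MeasurePreserving.
Context {R : realType} {d : measure_display} {T : measurableType d}.
Context {mu : {measure set T -> \bar R}} {f : T -> T}.
Hypothesis mf : measurable_fun setT f.
Hypothesis mu_f : forall B : set T, measurable B -> mu (f @^-1` B) = mu B.

Let integral_pushforward_preserving (D : set T) (F : T -> \bar R) :
  (\int[pushforward mu f]_(x in D) F x = \int[mu]_(x in D) F x)%E.
Proof. by apply: eq_measure_integral => B mB _; exact: mu_f. Qed.

Lemma integrable_comp_preserving {g : T -> R} :
  mu.-integrable setT (EFin \o g) -> mu.-integrable setT (EFin \o (g \o f)).
Proof.
move=> gi; have /measurable_EFinP mg := measurable_int mu gi.
apply/integrableP; split; first by apply/measurable_EFinP; exact: measurableT_comp.
move/integrableP: gi => [_]; apply: le_lt_trans.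
rewrite -[leRHS]integral_pushforward_preserving.
rewrite ge0_integral_pushforward ?preimage_setT //.
by apply: measurableT_comp => //; exact/measurable_EFinP.
Qed.

Lemma Rintegral_comp_preserving {g : T -> R} :
  mu.-integrable setT (EFin \o g) -> \int[mu]_x g (f x) = \int[mu]_x g x.
Proof.
move=> gi; rewrite /Rintegral -[in RHS]integral_pushforward_preserving.
rewrite integral_pushforward ?preimage_setT //.
- exact: measurable_int gi.
- exact: integrable_comp_preserving.
Qed.

End MeasurePreserving.

Lemma derivable_comp_opp {R : realFieldType} (h : R -> R) (x : R) :
  derivable h (- x) 1 -> derivable (fun t => h (- t)) x 1.
Proof.
move=> /derivable1_diffP dh; apply/derivable1_diffP.
have dN : differentiable (-%R : R -> R) x by apply/derivable1_diffP; exact: derivable_opp.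
exact: (differentiable_comp dN dh).
Qed.

Lemma derive1_comp_opp {R : realFieldType} (h : R -> R) (x : R) :
  derivable h (- x) 1 -> derive1 (fun t => h (- t)) x = - derive1 h (- x).
Proof.
move=> dh; rewrite (derive1_comp (@derivable_opp _ x 1) dh).
have -> : derive1 (-%R : R -> R) x = -1.
  by rewrite derive1E deriveN ?derive_id //; exact: derivable_id.
by rewrite mulrN1.
Qed.

Lemma flux_reversal {R : realType} {d : measure_display} {T : measurableType d}
    (phi : R -> T -> T) (Theta : T -> T) (A : T -> R) (e : R) (x : T) :
  (forall t, phi t (Theta x) = Theta (phi (- t) x)) ->
  (forall y, A (Theta y) = e * A y) ->
  derivable (fun t => A (phi t x)) 0 1 ->
  flux phi A (Theta x) = - e * flux phi A x.
Proof.
move=> hTR hA dA; rewrite /flux.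
set h := fun t => A (phi t x).
have -> : (fun t => A (phi t (Theta x))) = (fun t => e * h (- t)).
  by apply/funext => t; rewrite hTR hA.
have dh : derivable h (- 0) 1 by rewrite oppr0.
by rewrite derive1Ml ?derive1_comp_opp ?oppr0 ?mulrN ?mulNr //; exact: derivable_comp_opp.
Qed.

Lemma wexp_one_sub_chi {R : realType} {d : measure_display} {T : measurableType d}
    (mu : {measure set T -> \bar R}) (Theta : T -> T) (W X : T -> R) :
  (forall x, W x != 0) ->
  mu.-integrable setT (fun x => (X x * W x)%:E) ->
  mu.-integrable setT (fun x => (X x * W (Theta x))%:E) ->
  wexp mu W (fun x => (1 - chi Theta W x) * X x)
  = wexp mu W X - (\int[mu]_x (X x * W (Theta x))) / \int[mu]_x W x.
Proof.
move=> W_neq0 XW_int XWTheta_int; rewrite /wexp -mulrBl -RintegralB //.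
by congr (_ / _); apply: eq_Rintegral => x _; rewrite /chi; field.
Qed.

Section TimeReversal.
Context {R : realType} {d : measure_display} {T : measurableType d}.
Context {mu : {measure set T -> \bar R}} {phi : R -> T -> T} {Theta : T -> T}.
Hypothesis phi_meas : forall t, measurable_fun setT (phi t).
Hypothesis phi0 : forall x, phi 0 x = x.
Hypothesis phiD : forall s t x, phi (s + t) x = phi s (phi t x).
Hypothesis mu_phi : forall t (B : set T), measurable B -> mu (phi t @^-1` B) = mu B.
Hypothesis Theta_meas : measurable_fun setT Theta.
Hypothesis mu_Theta : forall B : set T, measurable B -> mu (Theta @^-1` B) = mu B.
Hypothesis phi_Theta : forall t x, phi t (Theta x) = Theta (phi (- t) x).

Context {a b W : T -> R} {ea eb t : R}.
Hypotheses (ea2 : ea ^+ 2 = 1) (eb2 : eb ^+ 2 = 1).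
Hypothesis a_Theta : forall x, a (Theta x) = ea * a x.
Hypothesis b_Theta : forall x, b (Theta x) = eb * b x.
Hypothesis W_phi : forall x, W (phi t x) = W x.
Hypothesis backward_int :
  mu.-integrable setT (fun x => (a x * b (phi (- t) x) * W x)%:E).

Let backward x := a x * b (phi (- t) x) * W x.

Let backward_ThetaE x : a x * b (phi t x) * W (Theta x) = ea * eb * backward (Theta x).
Proof.
rewrite /backward a_Theta phi_Theta opprK b_Theta.
transitivity (ea ^+ 2 * eb ^+ 2 * (a x * b (phi t x) * W (Theta x))); last by ring.
by rewrite ea2 eb2 !mul1r.
Qed.

Let backward_Theta_int : mu.-integrable setT (EFin \o (backward \o Theta)).
Proof.
exact: (integrable_comp_preserving Theta_meas mu_Theta (g := backward) backward_int).
Qed.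

Lemma integrable_reversed_correlation :
  mu.-integrable setT (fun x => (a x * b (phi t x) * W (Theta x))%:E).
Proof.
have := integrableZl measurableT (ea * eb) backward_Theta_int.
apply: eq_integrable measurableT _ _ _ => x _.
by rewrite /= backward_ThetaE EFinM.
Qed.

Lemma reversed_correlationE :
  \int[mu]_x (a x * b (phi t x) * W (Theta x))
  = ea * eb * \int[mu]_x (b x * a (phi t x) * W x).
Proof.
under eq_Rintegral do rewrite backward_ThetaE.
rewrite RintegralZl // (Rintegral_comp_preserving Theta_meas mu_Theta backward_int).
rewrite -(Rintegral_comp_preserving (phi_meas t) (mu_phi t) backward_int).
apply: congr2 => //; apply: eq_Rintegral => x _.
by rewrite -phiD addNr phi0 W_phi [_ * b x]mulrC.
Qed.

Lemma wexp_reversal :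
  (forall x, W x != 0) ->
  mu.-integrable setT (fun x => (a x * b (phi t x) * W x)%:E) ->
  wexp mu W (fun x => (1 - chi Theta W x) * a x * b (phi t x))
  = wexp mu W (fun x => a x * b (phi t x))
    - ea * eb * wexp mu W (fun x => b x * a (phi t x)).
Proof.
move=> W_neq0 corr_int.
under [X in wexp _ _ X]eq_fun do rewrite -mulrA.
rewrite wexp_one_sub_chi //; last exact: integrable_reversed_correlation.
by rewrite reversed_correlationE mulrA.
Qed.

End TimeReversal.

Theorem mainTheorem1 (R : realType) (d : measure_display) (T : measurableType d)
  (mu : {measure set T -> \bar R})
  (phi : R -> T -> T) (Theta : T -> T) (Psi : T -> R)
  (n : nat) (A : 'I_n -> T -> R) (eps : 'I_n -> R)
  (* the flow is a measurable one-parameter group preserving mu (Liouville) *)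
  (hphi_meas : forall t, measurable_fun setT (phi t))
  (hphi0 : forall x, phi 0 x = x)
  (hphiD : forall s t x, phi (s + t) x = phi s (phi t x))
  (hphi_mu : forall t (B : set T), measurable B -> mu (phi t @^-1` B) = mu B)
  (* Theta is a measurable, mu-preserving involution *)
  (hTheta_meas : measurable_fun setT Theta)
  (hTheta_inv : forall x, Theta (Theta x) = x)
  (hTheta_mu : forall B : set T, measurable B -> mu (Theta @^-1` B) = mu B)
  (* time-reversal covariance of the dynamics *)
  (hTR : forall t x, phi t (Theta x) = Theta (phi (- t) x))
  (* weight W = exp Psi: measurable, integrable, stationary under the flow *)
  (hPsi_meas : measurable_fun setT Psi)
  (hW_int : mu.-integrable setT (fun x => (expR (Psi x))%:E))
  (hW_stat : forall t x, Psi (phi t x) = Psi x)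
  (* observables with definite time-reversal parity, differentiable along the flow *)
  (heps : forall i, eps i = 1 \/ eps i = -1)
  (hA_par : forall i x, A i (Theta x) = eps i * A i x)
  (hA_der : forall i x, derivable (fun t : R => A i (phi t x)) 0 1)
  (* existence of the correlation integrals *)
  (hC_int : forall i j t, mu.-integrable setT
     (fun x => (flux phi (A i) x * flux phi (A j) (phi t x) * expR (Psi x))%:E))
  (hL_int : forall i j, lebesgue_measure.-integrable `[0%R, +oo[%classic
     (fun t => (wexp mu (fun x => expR (Psi x))
                  (fun x => flux phi (A i) x * flux phi (A j) (phi t x)))%:E)) :
  forall i j : 'I_n,
    Lcoef mu phi (fun x => expR (Psi x)) (flux phi (A i)) (flux phi (A j))
    - eps i * eps j *
      Lcoef mu phi (fun x => expR (Psi x)) (flux phi (A j)) (flux phi (A i))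
    = \int[lebesgue_measure]_(t in `[0%R, +oo[%classic)
        wexp mu (fun x => expR (Psi x))
          (fun x => (1 - chi Theta (fun y => expR (Psi y)) x)
                    * flux phi (A i) x * flux phi (A j) (phi t x)).
Proof.
move=> i j.
have J_Theta k x : flux phi (A k) (Theta x) = - eps k * flux phi (A k) x.
  exact: flux_reversal (hA_par k) (hA_der k x).
have Neps_sq k : (- eps k) ^+ 2 = 1.
  by rewrite sqrrN; case: (heps k) => ->; rewrite ?sqrrN expr1n.
have W_neq0 x : expR (Psi x) != 0 by rewrite gt_eqF ?expR_gt0.
have corr_reversal t :
    wexp mu (fun x => expR (Psi x))
      (fun x => (1 - chi Theta (fun y => expR (Psi y)) x)
                * flux phi (A i) x * flux phi (A j) (phi t x))
    = wexp mu (fun x => expR (Psi x))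
        (fun x => flux phi (A i) x * flux phi (A j) (phi t x))
      - eps i * eps j * wexp mu (fun x => expR (Psi x))
        (fun x => flux phi (A j) x * flux phi (A i) (phi t x)).
  rewrite -[eps i * eps j]mulrNN.
  apply: (wexp_reversal hphi_meas hphi0 hphiD hphi_mu hTheta_meas hTheta_mu hTR
            (Neps_sq i) (Neps_sq j) (J_Theta i) (J_Theta j)) => //.
  by move=> x; rewrite hW_stat.
rewrite /Lcoef -RintegralZl //; last exact: hL_int.
rewrite -RintegralB //.
- by apply: eq_Rintegral => t _; rewrite corr_reversal.
- exact: hL_int.
- apply: (eq_integrable _ _ _ _ (integrableZl _ (eps i * eps j) (hL_int j i))) => //.
Qed.
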